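(* Let $\alpha>0$, let $X_{0-}$ be a real-valued random variable and let $Z$ be a continuous stochastic process with $Z_0=0$, independent of $X_{0-}$, satisfying the crossing property (see context). For $\ell\in M$ define $\Gamma[\ell]_t=\mathbb{P}(\tau[\ell]\le t)$ with $\tau[\ell]=\inf\{t\ge0:X_{0-}+Z_t-\alpha\ell_t\le0\}$, and for $\Delta>0$ define $\Gamma_\Delta[\ell]_t=\mathbb{P}(\tau^\Delta[\ell]\le t)$ with $\tau^\Delta[\ell]=\inf\{t\ge0:X_{0-}+Z_{\Delta\lfloor t/\Delta\rfloor}-\alpha\ell_{\Delta\lfloor t/\Delta\rfloor}\le0\}$. Let $\Delta_n>0$ with $\Delta_n\to0$ and suppose $\ell^n\to\ell$ in $M$. Then $\lim_{n\to\infty}\Gamma_{\Delta_n}[\ell^n]=\Gamma[\ell]$ in $M$.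
   Context: Crossing property: for every stopping time $\tau$ with respect to the natural filtration of $X_{0-}+Z$ and every $h>0$, $\mathbb{P}(\tau<\infty,\ \inf_{0\le s\le h}(Z_{\tau+s}-Z_\tau)=0)=0$. $M$ is the set of càdlàg increasing functions $\ell:\overline{\mathbb{R}}\to[0,1]$ ($\overline{\mathbb{R}}$ the two-point compactification of $\mathbb{R}$) with $\ell_{0-}=0$ and $\ell_\infty=1$, with the topology: $\ell^n\to\ell$ iff $\ell^n_t\to\ell_t$ for all $t\in[0,\infty]$ at which $\ell$ is continuous. *)

From HB Require Import structures.
From mathcomp Require Import all_boot all_order all_algebra.
From mathcomp Require Import all_classical all_reals all_analysis.
Set Implicit Arguments. Unset Strict Implicit. Unset Printing Implicit Defensive.
Import Order.TTheory GRing.Theory Num.Theory.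
Import numFieldNormedType.Exports.
Local Open Scope classical_set_scope.
Local Open Scope ring_scope.

Section Defs.
Context {R : realType} {d : measure_display} {Omega : measurableType d}.

Definition gen_sigma (I : set R) (Y : R -> Omega -> R) : set (set Omega) :=
  <<s [set Y s @^-1` B | s in I & B in [set B : set R | measurable B]] >>.

Definition sigma_rv (X : Omega -> R) : set (set Omega) :=
  <<s [set X @^-1` B | B in [set B : set R | measurable B]] >>.

Definition indep_rv_process (P : probability Omega R) (X : Omega -> R)
    (Z : R -> Omega -> R) : Prop :=
  forall A B, sigma_rv X A -> gen_sigma `[0, +oo[ Z B ->
    P (A `&` B) = (P A * P B)%E.

Definition natural_filtration (Y : R -> Omega -> R) (t : R) :
  set (set Omega) := gen_sigma `[0, t] Y.

Definition stopping_time (Y : R -> Omega -> R) (tau : Omega -> \bar R) : Prop :=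
  (forall w, (0 <= tau w)%E) /\
  forall t : R, 0 <= t -> natural_filtration Y t [set w | (tau w <= t%:E)%E].

Definition crossing_property (P : probability Omega R) (X0 : Omega -> R)
    (Z : R -> Omega -> R) : Prop :=
  forall tau : Omega -> \bar R,
    stopping_time (fun t w => X0 w + Z t w) tau ->
    forall h : R, 0 < h ->
    P.-negligible [set w | (tau w < +oo)%E /\
        inf [set Z (fine (tau w) + s) w - Z (fine (tau w)) w | s in `[0, h]] = 0].

(* the space M: functions on the extended reals, increasing, [0,1]-valued,
   cadlag, with l_{0-} = 0 and l_{+oo} = 1 *)
Definition in_M (l : \bar R -> R) : Prop :=
  {homo l : s t / (s <= t)%E >-> s <= t} /\
  (forall t, 0 <= l t <= 1) /\
  (forall t, (t < 0)%E -> l t = 0) /\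
  l +oo%E = 1 /\
  (forall x : R, (fun r : R => l r%:E) @ at_right x --> l x%:E) /\
  (forall x : R, cvg ((fun r : R => l r%:E) @ at_left x)) /\
  ((fun r : R => l r%:E) @ -oo --> l -oo%E) /\
  cvg ((fun r : R => l r%:E) @ +oo).

Definition cvg_M (ln : nat -> \bar R -> R) (l : \bar R -> R) : Prop :=
  forall t : \bar R, (0 <= t)%E -> {for t, continuous l} ->
    (fun n => ln n t) @ \oo --> l t.

Definition hit_time (alpha : R) (X0 : Omega -> R) (Z : R -> Omega -> R)
    (l : \bar R -> R) (w : Omega) : \bar R :=
  ereal_inf [set t%:E | t in [set t : R | 0 <= t /\ X0 w + Z t w - alpha * l t%:E <= 0]].

Definition grid (Delta t : R) : R := (Num.floor (t / Delta))%:~R * Delta.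

Definition hit_time_disc (Delta alpha : R) (X0 : Omega -> R) (Z : R -> Omega -> R)
    (l : \bar R -> R) (w : Omega) : \bar R :=
  ereal_inf [set t%:E | t in [set t : R | 0 <= t /\
     X0 w + Z (grid Delta t) w - alpha * l (grid Delta t)%:E <= 0]].

Definition Gamma (P : probability Omega R) (alpha : R) (X0 : Omega -> R)
    (Z : R -> Omega -> R) (l : \bar R -> R) (t : \bar R) : R :=
  fine (P [set w | (hit_time alpha X0 Z l w <= t)%E]).

Definition Gamma_disc (P : probability Omega R) (Delta alpha : R) (X0 : Omega -> R)
    (Z : R -> Omega -> R) (l : \bar R -> R) (t : \bar R) : R :=
  fine (P [set w | (hit_time_disc Delta alpha X0 Z l w <= t)%E]).

End Defs.

From HB Require Import structures.
From mathcomp Require Import all_boot all_order all_algebra.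
From mathcomp Require Import all_classical all_reals all_analysis.
From mathcomp Require Import lra.
Import Order.TTheory GRing.Theory Num.Theory.
Import numFieldNormedType.Exports.
Local Open Scope classical_set_scope.
Local Open Scope ring_scope.

(* Pathwise, tau[l] is the first nonpositive time of the slack
   s |-> X_{0-} + Z_s - alpha l_s, which is lower semicontinuous because Z is
   continuous and l is increasing and right-continuous; hence tau[l] <= t iff
   the slack is nonpositive somewhere in [0, t], and {tau[l] <= t} only depends
   on the slack at countably many times, so tau[l] is a stopping time.
   If the slack is positive on [0, t], compactness and the convergence of l^n
   at the (dense) continuity points of l keep the slack of l^n positive on
   [0, t] for large n, so that tau^{Delta_n}[l^n] > t eventually. If the slack
   is negative at some time before t, grid points of mesh Delta_n just to its
   right eventually witness tau^{Delta_n}[l^n] <= t. By the crossing property,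
   almost surely Z drops below Z_{tau[l]} immediately after tau[l], so the
   slack becomes negative there; and continuity of Gamma[l] at t makes
   {tau[l] = t} null. Hence the events {tau^{Delta_n}[l^n] <= t} converge
   almost surely to {tau[l] <= t}, and so do their probabilities. *)

Section in_M.
Context {R : realType} {l : \bar R -> R} (hl : in_M l).

Lemma in_M_le {s t : R} : s <= t -> l s%:E <= l t%:E.
Proof. by case: hl => homo _ st; apply: homo; rewrite lee_fin. Qed.

Lemma in_M_usc (x e : R) : 0 < e -> \forall u \near x, l u%:E < l x%:E + e.
Proof.
move=> e0; case: hl => _ [_ [_ [_ [/(_ x) /cvgr_dist_lt /(_ e e0) + _]]]].
rewrite near_withinE; apply: filterS => u Hu; case: (leP u x) => [ux|xu].
  by rewrite (le_lt_trans (in_M_le ux)) // ltrDl.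
by have := Hu xu; rewrite distrC => /(le_lt_trans (ler_norm _)); rewrite ltrBlDl.
Qed.

(* A monotone function has countably many discontinuities, whereas every
   nonempty open interval has positive Lebesgue measure. *)
Lemma in_M_continuity_point {a b : R} : a < b ->
  exists2 v, a < v < b & {for v%:E, continuous l}.
Proof.
move=> ab; apply: contrapT => /forall2NP discont.
case: hl => _ [_ [_ [_ [rc [lc _]]]]].
pose F r := l r%:E.
have ndF : {in `[a, b] &, nondecreasing_fun F} by move=> x y _ _; exact: in_M_le.
have sub : [set` `]a, b[] `<=` [set x | (x \in `]a, b[) /\ discontinuity F x].
  move=> v vab; split; first by rewrite inE.
  have vab' : a < v < b by move: vab; rewrite /= in_itv.
  case: (discont v) => // contv; split; first exact: lc.
    by apply/cvg_ex; exists (l v%:E).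
  apply/negP => /eqP lrE; apply: contv => U.
  have /[apply] Ul : F @ v --> l v%:E.
    apply/left_right_continuousP; split; last exact: rc.
    have -> : F v = lim (F x @[x --> v^'-]) by rewrite lrE (cvg_lim _ (rc v)).
    exact: lc.
  by apply/nbhs_EFin; exact: Ul.
have := countable_lebesgue_measure0 (sub_countable (subset_card_le sub)
  (discontinuity_countable ndF)).
rewrite lebesgue_measure_itv /= lte_fin ab => /eqP.
by rewrite -EFinB eqe subr_eq0 gt_eqF.
Qed.

End in_M.

Section cvg_M.
Context {R : realType} {ln : nat -> \bar R -> R} {l : \bar R -> R}.
Hypotheses (hl : in_M l) (cvl : cvg_M ln l).

Lemma cvg_M_lower {s b e : R} : 0 <= s -> s < b -> 0 < e ->
  exists2 v, s < v < b & \forall n \near \oo, l s%:E - e < ln n v%:E.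
Proof.
move=> s0 sb e0; have [v /andP[sv vb] contv] := in_M_continuity_point hl sb.
exists v; first by rewrite sv vb.
have : (0 <= v%:E)%E by rewrite lee_fin ltW // (le_lt_trans s0 sv).
move=> /cvl /(_ contv) /cvgr_dist_lt /(_ e e0).
apply: filterS => n /ltr_normlP[_]; have := in_M_le hl (ltW sv); lra.
Qed.

Lemma cvg_M_upper {x e : R} : 0 <= x -> 0 < e ->
  exists2 v, x < v & \forall n \near \oo, ln n v%:E < l x%:E + e.
Proof.
move=> x0 e0; have e2 : 0 < e / 2 by rewrite divr_gt0.
have /nbhs_ballP[d /= d0 usc] := in_M_usc hl x _ e2.
have [|v /andP[xv vd] contv] := in_M_continuity_point hl (_ : x < x + d).
  by rewrite ltrDl.
have lv : l v%:E < l x%:E + e / 2.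
  by apply: usc; rewrite -ball_normE /ball_ /= ltr_distlC; lra.
exists v => //.
have : (0 <= v%:E)%E by rewrite lee_fin ltW // (le_lt_trans x0 xv).
move=> /cvl /(_ contv) /cvgr_dist_lt /(_ _ e2).
by apply: filterS => n /ltr_normlP[+ _]; lra.
Qed.

End cvg_M.

Section hitting.
Context {R : realType}.
Implicit Types (f : R -> R) (r s t e : R).

Definition hitting f : \bar R :=
  ereal_inf [set t%:E | t in [set t | 0 <= t /\ f t <= 0]].

Definition lsc_nonneg f := forall r, 0 <= r -> forall e, 0 < e ->
  \forall u \near r, 0 <= u -> f r - e < f u.

Definition right_usc f := forall s, 0 <= s -> forall e, 0 < e ->
  \forall u \near s, s <= u -> f u < f s + e.

Lemma hitting_ge0 f : (0 <= hitting f)%E.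
Proof. by apply: le_ereal_inf_tmp => _ [t [t0 _] <-]; rewrite lee_fin. Qed.

Lemma hitting_le {f s} : 0 <= s -> f s <= 0 -> (hitting f <= s%:E)%E.
Proof. by move=> s0 fs; apply: ereal_inf_lbound; exists s. Qed.

Lemma hitting_attained {f r} : lsc_nonneg f -> hitting f = r%:E -> f r <= 0.
Proof.
move=> lsc hE; have r0 : 0 <= r by rewrite -lee_fin -hE hitting_ge0.
rewrite leNgt; apply/negP => fr.
have /nbhs_ballP[d /= d0 pos] := lsc r r0 _ fr.
suff : ((r + d)%:E <= hitting f)%E by rewrite hE lee_fin gerDl leNgt d0.
apply: le_ereal_inf_tmp => _ [s [s0 fs] <-]; rewrite lee_fin leNgt.
apply/negP => srd; have rs : r <= s by rewrite -lee_fin -hE hitting_le.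
suff : f r - f r < f s by rewrite subrr ltNge fs.
apply: pos s0; rewrite -ball_normE /ball_ /= ler0_norm ?subr_le0 //; lra.
Qed.

Lemma hitting_leP {f t} : lsc_nonneg f ->
  (hitting f <= t%:E)%E <-> exists s, [/\ 0 <= s, s <= t & f s <= 0].
Proof.
move=> lsc; split => [ht|[s [s0 st fs]]]; last first.
  by apply: le_trans (hitting_le s0 fs) _; rewrite lee_fin.
have /fineK hE : hitting f \is a fin_num.
  by rewrite ge0_fin_numE ?hitting_ge0 // (le_lt_trans ht) ?ltry.
exists (fine (hitting f)); split; last exact: hitting_attained.
- by rewrite -lee_fin hE hitting_ge0.
- by rewrite -lee_fin hE.
Qed.

Lemma lsc_nonneg_pos_lbound {f t} : lsc_nonneg f ->
  (forall s, 0 <= s -> s <= t -> 0 < f s) ->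
  exists2 e, 0 < e & forall u, 0 <= u -> u <= t -> e < f u.
Proof.
move=> lsc pos; have /compact_near_coveringP cpt := @segment_compact R 0 t.
have [|k bound] := filter_ex (cpt nat \oo
  (fun k u => 0 <= u -> u <= t -> k.+1%:R^-1 < f u) _ _).
  move=> x; rewrite /= in_itv /= => /andP[x0 xt].
  have fx2 : 0 < f x / 2 by rewrite divr_gt0 ?pos.
  near=> u k.
  have kfx : k.+1%:R^-1 < f x / 2.
    by near: k; exact: (near_infty_natSinv_lt (PosNum fx2)).
  have lscx : 0 <= u -> f x - f x / 2 < f u by near: u; exact: lsc.
  move=> u0 _; apply: lt_trans kfx _.
  by have := lscx u0; rewrite {1}(splitr (f x)) addrK.
exists k.+1%:R^-1 => [|u u0 ut]; first by rewrite invr_gt0.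
by apply: bound => //; rewrite /= in_itv /= u0 ut.
Unshelve. all: end_near. Qed.

Lemma exists_frac_between {s d : R} : 0 <= s -> 0 < d ->
  exists j m : nat, s < j%:R / m.+1%:R < s + d.
Proof.
move=> s0 d0; have [m md] := filter_ex (near_infty_natSinv_lt (PosNum d0)).
set M : R := m.+1%:R in md *; have M0 : 0 < M by rewrite ltr0n.
set n := Num.truncn (s * M).
have n1 : s * M < n.+1%:R by rewrite truncnS_gt.
have n2 : n%:R <= s * M by rewrite truncn_le mulr_ge0 // ltW.
exists n.+1, m; rewrite ltr_pdivlMr // n1 /=.
apply: le_lt_trans (_ : s + M^-1 < s + d); last by rewrite ltrD2l.
by rewrite ler_pdivrMr // mulrDl mulVf ?gt_eqF // -natr1 lerD2r.
Qed.

Lemma hitting_le_fracP {f t} : 0 <= t -> lsc_nonneg f -> right_usc f ->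
  (hitting f <= t%:E)%E <->
  forall k : nat, exists j m : nat,
    f (Num.min (j%:R / m.+1%:R) t) < k.+1%:R^-1.
Proof.
move=> t0 lsc rusc; rewrite (hitting_leP lsc); split.
- move=> [s [s0 st fs]] k.
  have k0 : (0 : R) < k.+1%:R^-1 by rewrite invr_gt0.
  have /nbhs_ballP[d /= d0 fsd] := rusc s s0 _ k0.
  have [j [m /andP[sq qd]]] := exists_frac_between s0 d0.
  exists j, m; set q := Num.min _ t.
  have sq' : s <= q by rewrite le_min ltW.
  have sq0 : s - q <= 0 by rewrite subr_le0.
  have qj : q <= j%:R / m.+1%:R by rewrite ge_min lexx.
  have : f q < f s + k.+1%:R^-1.
    apply: fsd sq'; rewrite -ball_normE /ball_ /= ler0_norm //.
    by rewrite opprB ltrBlDl (le_lt_trans qj).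
  by move: (k.+1%:R^-1 : R) => e; lra.
- move=> small; apply: contrapT => nle.
  have pos s : 0 <= s -> s <= t -> 0 < f s.
    by move=> s0 st; rewrite ltNge; apply/negP => fs; apply: nle; exists s.
  have [e e0 fe] := lsc_nonneg_pos_lbound lsc pos.
  have [k /= ke] := filter_ex (near_infty_natSinv_lt (PosNum e0)).
  have [j [m]] := small k; apply/negP; rewrite -leNgt ltW // (lt_trans ke) //.
  by apply: fe; rewrite ?le_min ?ge_min ?lexx ?orbT ?t0 ?divr_ge0.
Qed.

End hitting.

Section grid.
Context {R : realType}.
Implicit Types (f : R -> R) (t x D : R).

Lemma grid_le D x : 0 < D -> grid D x <= x.
Proof. by move=> D0; rewrite /grid -ler_pdivlMr // floor_le. Qed.

Lemma grid_gt D x : 0 < D -> x - D < grid D x.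
Proof.
move=> D0; rewrite /grid ltrBlDr -[X in _ < _ + X]mul1r -mulrDl.
by rewrite -ltr_pdivrMr // -[1]/(1%:~R) -intrD floorD1_gt.
Qed.

Lemma grid_natrM D (k : nat) : 0 < D -> grid D (k%:R * D) = k%:R * D.
Proof.
move=> D0; rewrite /grid mulfK ?gt_eqF //.
by have -> : (k%:R : R) = (k%:Z)%:~R by []; rewrite intrKfloor.
Qed.

Lemma hitting_grid_leP {D f t} : 0 < D ->
  (hitting (f \o grid D) <= t%:E)%E <->
  exists k : nat, k%:R * D <= t /\ f (k%:R * D) <= 0.
Proof.
move=> D0; split => [ht|[k [kt fk]]]; last first.
  apply: le_trans (_ : (k%:R * D)%:E <= t%:E)%E; last by rewrite lee_fin.
  by apply: hitting_le; rewrite /= ?grid_natrM // mulr_ge0 // ltW.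
have /ereal_inf_lt[_ [s [s0 fs] <-]] :
    (hitting (f \o grid D) < ((Num.floor (t / D) + 1)%:~R * D)%:E)%E.
  by apply: le_lt_trans ht _; rewrite lte_fin -ltr_pdivrMr // floorD1_gt.
rewrite lte_fin => st.
case E: (Num.floor (s / D)) => [k|k]; last first.
  by have := floor_ge0 (s / D); rewrite E /= divr_ge0 // ltW.
exists k; have -> : k%:R * D = grid D s by rewrite /grid E.
split=> //; have : Num.floor (s / D) < Num.floor (t / D) + 1.
  by rewrite floor_lt_int ltr_pdivrMr.
by rewrite E ltzD1 floor_ge_int /grid E -ler_pdivlMr.
Qed.

Lemma near_grid_gt (Delta : nat -> R) (a b : R) :
  (forall n, 0 < Delta n) -> Delta @ \oo --> 0 -> a < b ->
  \forall n \near \oo, a < grid (Delta n) b.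
Proof.
move=> D0 /cvgr_dist_lt Dcvg ab; have := Dcvg (b - a); rewrite subr_gt0.
move=> /(_ ab); apply: filterS => n; rewrite sub0r normrN gtr0_norm //.
by move=> Dn; apply: lt_trans (grid_gt (Delta n) b (D0 n)); lra.
Qed.

End grid.

Lemma near_dist_within_nonneg {R : realType} {g : R -> R} {x e : R} :
  {within `[0, +oo[, continuous g} -> 0 <= x -> 0 < e ->
  \forall u \near x, 0 <= u -> `|g u - g x| < e.
Proof.
move=> /subspace_continuousP cg x0 e0.
have /cvgr_dist_lt /(_ e e0) : g @ within [set` `[0, +oo[] (nbhs x) --> g x.
  by apply: cg; rewrite /= in_itv /= x0.
rewrite near_withinE; apply: filterS => u gu u0; rewrite distrC.
by apply: gu; rewrite /= in_itv /= u0.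
Qed.

Definition slack {R : realType} (g : R -> R) (alpha : R) (l : \bar R -> R)
  (u : R) := g u - alpha * l u%:E.

Section slack.
Context {R : realType} {g : R -> R} {alpha : R} {l : \bar R -> R}.
Hypotheses (a0 : 0 < alpha) (hl : in_M l).

Lemma slack_lt {r s : R} : r <= s -> g s < g r ->
  slack g alpha l s < slack g alpha l r.
Proof.
move=> rs gsr; have : alpha * l r%:E <= alpha * l s%:E.
  by rewrite ler_pM2l // in_M_le.
rewrite /slack; lra.
Qed.

Hypothesis hg : {within `[0, +oo[, continuous g}.

Lemma slack_lsc : lsc_nonneg (slack g alpha l).
Proof.
move=> r r0 e e0; have e2 : 0 < e / 2 by rewrite divr_gt0.
have e2a : 0 < e / 2 / alpha by rewrite divr_gt0.
near=> u => u0.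
have /ltr_normlP[] : `|g u - g r| < e / 2.
  by move: u0; near: u; exact: near_dist_within_nonneg.
have : l u%:E < l r%:E + e / 2 / alpha.
  by near: u; exact: in_M_usc hl r _ e2a.
rewrite -(ltr_pM2l a0) mulrDr mulrCA mulfV ?gt_eqF // mulr1 /slack; lra.
Unshelve. all: end_near. Qed.

Lemma slack_right_usc : right_usc (slack g alpha l).
Proof.
move=> s s0 e e0; apply: filterS (near_dist_within_nonneg hg s0 e0) => u gu su.
have /ltr_normlP[_] := gu (le_trans s0 su).
have : alpha * l s%:E <= alpha * l u%:E by rewrite ler_pM2l // in_M_le.
rewrite /slack; lra.
Qed.

End slack.

Section slack_grid.
Context {R : realType} {g : R -> R} {alpha : R} {Delta : nat -> R}
  {ln : nat -> \bar R -> R} {l : \bar R -> R}.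
Hypotheses (a0 : 0 < alpha) (hg : {within `[0, +oo[, continuous g})
  (D0 : forall n, 0 < Delta n) (Dcvg : Delta @ \oo --> 0)
  (hln : forall n, in_M (ln n)) (hl : in_M l) (cvl : cvg_M ln l).

Let hitting_grid n := hitting (slack g alpha (ln n) \o grid (Delta n)).

Lemma hitting_grid_eventually_le {s t : R} : 0 <= s -> s < t ->
  slack g alpha l s < 0 -> \forall n \near \oo, (hitting_grid n <= t%:E)%E.
Proof.
set eta := - slack g alpha l s => s0 st; rewrite -oppr_gt0 -/eta => eta0.
have e4 : 0 < eta / 4 by rewrite divr_gt0.
have e4a : 0 < eta / 4 / alpha by rewrite divr_gt0.
have /nbhs_ballP[d /= d0 gs] := near_dist_within_nonneg hg s0 e4.
pose m := Num.min d (t - s).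
have m0 : 0 < m by rewrite lt_min d0 subr_gt0.
have md : m <= d by rewrite ge_min lexx.
have mt : m <= t - s by rewrite ge_min lexx orbT.
pose b := s + m / 2.
have sb : s < b by rewrite ltrDl divr_gt0.
have bt : b <= t by rewrite /b; lra.
have bd : b < s + d by rewrite /b; lra.
have [v /andP[sv vb] lnv] := cvg_M_lower hl cvl s0 sb e4a.
near=> n.
have vG : v < grid (Delta n) b by near: n; exact: near_grid_gt.
have lsv : l s%:E - eta / 4 / alpha < ln n v%:E by near: n.
set G := grid (Delta n) b in vG *.
have Gb : G <= b := grid_le (Delta n) b (D0 n).
have G0 : 0 <= G by rewrite ltW // (le_lt_trans s0) // (lt_trans sv).
have /ltr_normlP[_ gG] : `|g G - g s| < eta / 4.
  apply: gs G0; rewrite -ball_normE /ball_ /= ltr_distlC.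
  by apply/andP; split; lra.
have : alpha * (l s%:E - eta / 4 / alpha) < alpha * ln n v%:E.
  by rewrite ltr_pM2l.
have : alpha * ln n v%:E <= alpha * ln n G%:E.
  by rewrite ler_pM2l // (in_M_le (hln n)) // ltW.
rewrite mulrBr mulrCA mulfV ?gt_eqF // mulr1 => lnG lsv'.
apply: le_trans (_ : b%:E <= t%:E)%E; last by rewrite lee_fin.
apply: hitting_le; first by rewrite (le_trans s0) // ltW.
have etaE : eta = - (g s - alpha * l s%:E) by [].
rewrite /= /slack -/G; lra.
Unshelve. all: end_near. Qed.

Lemma hitting_grid_eventually_gt {t : R} :
  (forall s, 0 <= s -> s <= t -> 0 < slack g alpha l s) ->
  \forall n \near \oo, (t%:E < hitting_grid n)%E.
Proof.
move=> pos; have /compact_near_coveringP cpt := @segment_compact R 0 t.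
have := cpt nat \oo (fun n u => 0 <= u -> u <= t -> 0 < slack g alpha (ln n) u) _.
move=> /(_ _) cov; apply: filterS (cov _) => [n posn|x].
  rewrite ltNge; apply/negP => /(hitting_grid_leP (D0 n))[k [kt]].
  have k0 : 0 <= k%:R * Delta n by rewrite mulr_ge0 // ltW.
  by rewrite leNgt posn //= in_itv /= k0 kt.
rewrite /= in_itv /= => /andP[x0 xt]; set eta := slack g alpha l x.
have eta0 : 0 < eta := pos x x0 xt.
have e4 : 0 < eta / 4 by rewrite divr_gt0.
have e4a : 0 < eta / 4 / alpha by rewrite divr_gt0.
have [v xv lnv] := cvg_M_upper hl cvl x0 e4a.
near=> u n.
have gu : 0 <= u -> `|g u - g x| < eta / 4.
  by near: u; exact: near_dist_within_nonneg.
have uv : u < v by near: u; exact: lt_nbhsl.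
have : alpha * ln n v%:E < alpha * (l x%:E + eta / 4 / alpha).
  by rewrite ltr_pM2l //; near: n.
have : alpha * ln n u%:E <= alpha * ln n v%:E.
  by rewrite ler_pM2l // (in_M_le (hln n)) // ltW.
rewrite mulrDr mulrCA mulfV ?gt_eqF // mulr1 => lnuv lnv'.
move=> /gu /ltr_normlP[gux _] _.
have etaE : eta = g x - alpha * l x%:E by [].
rewrite /slack; lra.
Unshelve. all: end_near. Qed.

End slack_grid.

Lemma set_lt_bigcup_le {R : realType} {Omega : Type} (T : Omega -> \bar R)
    (t : R) :
  \bigcup_k [set w | (T w <= (t - k.+1%:R^-1)%:E)%E] = [set w | (T w < t%:E)%E].
Proof.
apply/seteqP; split => [w [k _]|w] /=.
  by move/le_lt_trans; apply; rewrite lte_fin gtrBl invr_gt0.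
case Tw: (T w) => [r||] //= => [|_]; last first.
  by exists 0%N => //; rewrite /= Tw leNye.
rewrite lte_fin -subr_gt0 => tr0.
have [k /= kr] := filter_ex (near_infty_natSinv_lt (PosNum tr0)).
by exists k => //; rewrite /= Tw lee_fin; move: (k.+1%:R^-1) kr => e; lra.
Qed.

Section probability_limits.
Context {R : realType} {d : measure_display} {Omega : measurableType d}
  (P : probability Omega R).
Local Open Scope ereal_scope.

Lemma prob_cvg_eventually (A : (set Omega)^nat) (B : set Omega) :
  (forall n, measurable (A n)) -> measurable B ->
  P.-negligible (B `\` [set w | \forall n \near \oo, A n w]) ->
  (forall w, ~ B w -> \forall n \near \oo, ~ A n w) ->
  fine (P (A n)) @[n --> \oo] --> fine (P B).
Proof.
move=> mA mB [N [mN PN BN]] Bc.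
apply: fine_cvg; rewrite fineK ?fin_num_measure //.
pose C n := \bigcap_(k >= n) A k.
have mC n : measurable (C n) by apply: bigcap_measurable => //; exists n => /=.
have mUC : measurable (\bigcup_n C n) by exact: bigcupT_measurable.
have mL : measurable (lim_sup_set A).
  by apply: bigcapT_measurable => n; apply: bigcup_measurable => k _.
have UC_sup : \bigcup_n C n `<=` lim_sup_set A.
  move=> w [n _ Cnw] m _; exists (maxn n m); rewrite /= ?leq_maxr //.
  by apply: Cnw; rewrite /= leq_maxl.
have sup_B : lim_sup_set A `<=` B.
  move=> w supw; apply: contrapT => /Bc[n _ Anw].
  by have [k /= nk] := supw n I; apply: Anw.
have B_UC : B `<=` \bigcup_n C n `|` N.
  move=> w Bw; have [[n _ Anw]|Nw] := pselect (\forall n \near \oo, A n w).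
    by left; exists n => // k /= nk; exact: Anw.
  by right; apply: BN.
have PUC : P (\bigcup_n C n) = P B.
  apply/eqP; rewrite eq_le le_measure ?inE //=; last first.
    exact: subset_trans UC_sup sup_B.
  rewrite -(measureU0 mUC mN PN) le_measure ?inE //=; exact: measurableU.
have mD n : measurable (\bigcup_(k >= n) A k) by exact: bigcup_measurable.
apply: (@squeeze_cvge _ _ _ _ (P \o C) _ (fun n => P (\bigcup_(k >= n) A k))).
- apply: nearW => n; rewrite !le_measure ?inE //=.
  + by move=> w Aw; exists n => /=.
  + by move=> w; apply => /=.
- rewrite -PUC; apply: nondecreasing_cvg_mu => // m n mn.
  apply/subsetPset => w Cw k /= nk.
  by apply: Cw; rewrite /= (leq_trans mn).
- suff <- : P (lim_sup_set A) = P B.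
    by apply: lim_sup_set_cvg => //; rewrite ltey_eq fin_num_measure.
  apply/eqP; rewrite eq_le le_measure ?inE //= -{1}PUC le_measure ?inE //.
Qed.

Lemma prob_lt_eq_le_cdf_continuous {T : Omega -> \bar R} {t : R} :
  (forall s : R, measurable [set w | T w <= s%:E]) ->
  {for t%:E, continuous (fun s => fine (P [set w | T w <= s]))} ->
  P [set w | T w < t%:E] = P [set w | T w <= t%:E].
Proof.
move=> mT contT; pose B k := [set w | T w <= (t - k.+1%:R^-1)%:E].
have mB : measurable [set w | T w < t%:E].
  by rewrite -set_lt_bigcup_le; apply: bigcupT_measurable => k; exact: mT.
have /fine_cvg cvB :
    P \o B @ \oo --> (fine (P [set w | (T w < t%:E)%E]))%:E.
  rewrite fineK ?fin_num_measure // -set_lt_bigcup_le.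
  apply: nondecreasing_cvg_mu => [k||]; [exact: mT|by rewrite set_lt_bigcup_le|].
  move=> m n mn; apply/subsetPset => w /le_trans; apply.
  by rewrite lee_fin lerD2l lerN2 lef_pV2 ?posrE ?ltr0n // ler_nat ltnS.
have tk : (t - k.+1%:R^-1)%:E @[k --> \oo] --> t%:E.
  apply: cvg_EFin; first exact: nearW.
  apply/cvgrPdist_lt => e e0; near=> k.
  rewrite opprB addrC subrK ger0_norm ?invr_ge0 //.
  by near: k; exact: (near_infty_natSinv_lt (PosNum e0)).
have fineE : fine (P [set w | T w < t%:E]) = fine (P [set w | T w <= t%:E]).
  exact: cvg_unique cvB (cvg_comp _ _ tk contT).
by have := congr1 EFin fineE; rewrite !fineK ?fin_num_measure.
Unshelve. all: end_near. Qed.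

Lemma negligible_eq_cdf_continuous {T : Omega -> \bar R} {t : R} :
  (forall s : R, measurable [set w | T w <= s%:E]) ->
  {for t%:E, continuous (fun s => fine (P [set w | T w <= s]))} ->
  P.-negligible [set w | T w = t%:E].
Proof.
move=> mT contT; have PE := prob_lt_eq_le_cdf_continuous mT contT.
have mB : measurable [set w | T w < t%:E].
  by rewrite -set_lt_bigcup_le; apply: bigcupT_measurable => k; exact: mT.
exists ([set w | T w <= t%:E] `\` [set w | T w < t%:E]); split.
- exact: measurableD.
- rewrite measureD ?ltey_eq ?fin_num_measure // setIidr; last by move=> w /ltW.
  (* [measureD] views [P] through another coercion than [PE] does *)
  change (P [set w | T w <= t%:E] - P [set w | T w < t%:E] = 0).
  by rewrite PE subee ?fin_num_measure.
- by move=> w /= ->; rewrite lexx ltxx.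
Qed.

End probability_limits.

Section gen_sigma.
Context {R : realType} {d : measure_display} {Omega : measurableType d}
  {I : set R} {Y : R -> Omega -> R}.

Lemma gen_sigma_preimage s (B : set R) :
  I s -> measurable B -> gen_sigma I Y (Y s @^-1` B).
Proof. by move=> Is mB; apply: sub_gen_smallest; exists s => //; exists B. Qed.

Lemma gen_sigma_sub_measurable :
  (forall s, I s -> measurable_fun setT (Y s)) -> gen_sigma I Y `<=` measurable.
Proof.
move=> mY; apply: smallest_sub; first exact: sigma_algebra_measurable.
by move=> _ [s Is [B mB <-]]; rewrite -[_ @^-1` _]setTI; exact: mY.
Qed.

Lemma gen_sigma_bigcap (A : (set Omega)^nat) :
  (forall i, gen_sigma I Y (A i)) -> gen_sigma I Y (\bigcap_i A i).
Proof.
move=> GA; rewrite -[X in gen_sigma _ _ X]setCK setC_bigcap -setTD.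
apply: sigma_algebraCD; apply: sigma_algebra_bigcup => i; rewrite -setTD.
exact: sigma_algebraCD (GA i).
Qed.

End gen_sigma.

Lemma exists_dip_of_inf_neq0 {R : realType} (z : R -> R) (r h : R) : 0 <= h ->
  inf [set z (r + s) - z r | s in `[0, h]] != 0 ->
  exists2 s, 0 <= s <= h & z (r + s) < z r.
Proof.
move=> h0; apply: contraNP => /forall2NP nodip; set S := [set _ | _ in _].
have S0 : S 0 by exists 0; rewrite ?addr0 ?subrr //= in_itv /= lexx.
have lbS : lbound S 0.
  move=> _ [s /= /[!in_itv] /= sh <-]; rewrite subr_ge0 leNgt.
  by apply/negP => zs; have [] := nodip s; [move/(_ sh) | move/(_ zs)].
rewrite eq_le lb_le_inf ?andbT //; last by exists 0.
exact: (ge_inf (ex_intro _ 0 lbS)).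
Qed.

Definition crossing_event {R : realType} {Omega : Type} (Z : R -> Omega -> R)
    (tau : Omega -> \bar R) (h : R) : set Omega :=
  [set w | (tau w < +oo)%E /\
     inf [set Z (fine (tau w) + s) w - Z (fine (tau w)) w | s in `[0, h]] = 0].

Section hitting_process.
Context {R : realType} {d : measure_display} {Omega : measurableType d}
  {alpha : R} {X0 : Omega -> R} {Z : R -> Omega -> R}.
Hypotheses (a0 : 0 < alpha)
  (cZ : forall w, {within `[0, +oo[, continuous (fun t => Z t w)}).

Let Y t w := X0 w + Z t w.

Let cY w : {within `[0, +oo[, continuous (Y ^~ w)}.
Proof. by move=> x; apply: cvgD; [exact: cvg_cst | exact: cZ]. Qed.

Let hit_timeE l w :
  hit_time alpha X0 Z l w = hitting (slack (Y ^~ w) alpha l).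
Proof. by []. Qed.

Let hit_time_discE D l w :
  hit_time_disc D alpha X0 Z l w = hitting (slack (Y ^~ w) alpha l \o grid D).
Proof. by []. Qed.

Lemma hit_time_stopping {l} : in_M l -> stopping_time Y (hit_time alpha X0 Z l).
Proof.
move=> hl; split=> [w|t t0]; first exact: hitting_ge0.
pose q j m := Num.min (j%:R / m.+1%:R) t.
have -> : [set w | (hit_time alpha X0 Z l w <= t%:E)%E] =
    \bigcap_k \bigcup_j \bigcup_m
      Y (q j m) @^-1` `]-oo, alpha * l (q j m)%:E + k.+1%:R^-1[.
  apply/seteqP; split=> w;
    rewrite /= hit_timeE (hitting_le_fracP t0 (slack_lsc a0 hl (cY w))
                                            (slack_right_usc a0 hl (cY w))).
  - move=> small k _; have [j [m qk]] := small k.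
    by exists j => //; exists m; rewrite //= in_itv /= -ltrBlDl.
  - move=> small k; have [j _ [m _ qk]] := small k I.
    by exists j, m; move: qk; rewrite /= in_itv /= ltrBlDl.
apply: gen_sigma_bigcap => k; apply: sigma_algebra_bigcup => j.
apply: sigma_algebra_bigcup => m; apply: gen_sigma_preimage.
  by rewrite /= in_itv /= le_min ge_min lexx orbT t0 divr_ge0.
exact: measurable_itv.
Qed.

Lemma slack_neg_off_crossing {l w t} : in_M l ->
  (hit_time alpha X0 Z l w < t%:E)%E ->
  (forall k : nat, ~ crossing_event Z (hit_time alpha X0 Z l) k.+1%:R^-1 w) ->
  exists s, [/\ 0 <= s, s < t & slack (Y ^~ w) alpha l s < 0].
Proof.
move=> hl tau_t nocross; have lsc := slack_lsc a0 hl (cY w).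
have /fineK tauE : hit_time alpha X0 Z l w \is a fin_num.
  by rewrite ge0_fin_numE ?hitting_ge0 // (lt_trans tau_t) ?ltry.
set r := fine _ in tauE.
have r0 : 0 <= r by rewrite -lee_fin tauE hitting_ge0.
have rt : r < t by rewrite -lte_fin tauE.
have slack_r : slack (Y ^~ w) alpha l r <= 0 := hitting_attained lsc (esym tauE).
have tr0 : 0 < t - r by rewrite subr_gt0.
have [k /= kt] := filter_ex (near_infty_natSinv_lt (PosNum tr0)).
have [s /andP[s0 sk] Zs] : exists2 s, 0 <= s <= k.+1%:R^-1 & Z (r + s) w < Z r w.
  apply: (exists_dip_of_inf_neq0 (Z ^~ w)); first by rewrite invr_ge0.
  by apply/eqP => inf0; apply: (nocross k); split; rewrite -/r -?tauE ?ltry.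
exists (r + s); split; first by rewrite addr_ge0.
  by move: (k.+1%:R^-1) kt sk => e; lra.
apply: lt_le_trans slack_r; apply: (slack_lt a0 hl); first by rewrite lerDl.
by rewrite /Y ltrD2l.
Qed.

Context {Delta : nat -> R} {ln : nat -> \bar R -> R}.
Hypotheses (D0 : forall n, 0 < Delta n) (Dcvg : Delta @ \oo --> 0)
  (hln : forall n, in_M (ln n)).

Lemma hit_time_disc_eventually_le {l w t} : in_M l -> cvg_M ln l ->
  (hit_time alpha X0 Z l w < t%:E)%E ->
  (forall k : nat, ~ crossing_event Z (hit_time alpha X0 Z l) k.+1%:R^-1 w) ->
  \forall n \near \oo, (hit_time_disc (Delta n) alpha X0 Z (ln n) w <= t%:E)%E.
Proof.
move=> hl cvl tau_t nocross.
have [s [s0 st slack_s]] := slack_neg_off_crossing hl tau_t nocross.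
exact: (hitting_grid_eventually_le a0 (cY w) D0 Dcvg hln hl cvl s0 st slack_s).
Qed.

Lemma hit_time_disc_eventually_gt {l w t} : in_M l -> cvg_M ln l ->
  ~ (hit_time alpha X0 Z l w <= t%:E)%E ->
  \forall n \near \oo, ~ (hit_time_disc (Delta n) alpha X0 Z (ln n) w <= t%:E)%E.
Proof.
move=> hl cvl tau_t.
have pos s : 0 <= s -> s <= t -> 0 < slack (Y ^~ w) alpha l s.
  move=> s0 st; rewrite ltNge; apply/negP => slack_s; apply: tau_t.
  by apply/(hitting_leP (slack_lsc a0 hl (cY w))); exists s.
apply: filterS (hitting_grid_eventually_gt a0 (cY w) D0 hln hl cvl pos) => n.
by rewrite ltNge => /negP.
Qed.

Hypotheses (mX0 : measurable_fun setT X0)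
  (mZ : forall t, 0 <= t -> measurable_fun setT (Z t)).

Let mY t : 0 <= t -> measurable_fun setT (Y t).
Proof.
by move=> t0; apply: measurable_realfun.measurable_funD => //; exact: mZ.
Qed.

Lemma measurable_hit_time_le {l} t : in_M l ->
  measurable [set w | (hit_time alpha X0 Z l w <= t%:E)%E].
Proof.
move=> hl; have [t0|t0] := leP 0 t.
  apply: (gen_sigma_sub_measurable _ _ (proj2 (hit_time_stopping hl) t t0)).
  by move=> s; rewrite /= in_itv /= => /andP[s0 _]; exact: mY.
rewrite (_ : [set w | _] = set0) //; apply/seteqP; split => // w /=.
by move/(le_trans (hitting_ge0 _)); rewrite lee_fin leNgt t0.
Qed.

Lemma measurable_hit_time_disc_le D l t : 0 < D ->
  measurable [set w | (hit_time_disc D alpha X0 Z l w <= t%:E)%E].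
Proof.
move=> D_gt0; rewrite (_ : [set w | _] =
    \bigcup_(k in [set k : nat | k%:R * D <= t])
      Y (k%:R * D) @^-1` `]-oo, alpha * l (k%:R * D)%:E]).
  apply: bigcup_measurable => k _; rewrite -[_ @^-1` _]setTI.
  apply: (mY _ _ measurableT); last exact: measurable_itv.
  by rewrite mulr_ge0 // ltW.
apply/seteqP; split => w; rewrite /= hit_time_discE (hitting_grid_leP D_gt0).
  by move=> [k [kt]]; exists k; rewrite //= in_itv /= -subr_le0.
by move=> [k kt]; rewrite /= in_itv /= => Yk; exists k; rewrite /slack subr_le0.
Qed.

End hitting_process.

Theorem proposition2p11 (R : realType) (d : measure_display) (Omega : measurableType d)
  (P : probability Omega R) (alpha : R) (X0 : Omega -> R) (Z : R -> Omega -> R)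
  (Delta : nat -> R) (ln : nat -> \bar R -> R) (l : \bar R -> R) :
  0 < alpha ->
  measurable_fun setT X0 ->
  (forall t, 0 <= t -> measurable_fun setT (Z t)) ->
  (forall w, {within `[0, +oo[, continuous (fun t => Z t w)}) ->
  (forall w, Z 0 w = 0) ->
  indep_rv_process P X0 Z ->
  crossing_property P X0 Z ->
  (forall n, 0 < Delta n) ->
  Delta @ \oo --> 0 ->
  (forall n, in_M (ln n)) ->
  in_M l ->
  cvg_M ln l ->
  cvg_M (fun n => Gamma_disc P (Delta n) alpha X0 Z (ln n)) (Gamma P alpha X0 Z l).
Proof.
move=> a0 mX0 mZ cZ _ _ cross D0 Dcvg hln hl cvl [t| |] //; last first.
  move=> _ _; rewrite /Gamma /Gamma_disc.
  have allE (T : Omega -> \bar R) : [set w | (T w <= +oo)%E] = setT.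
    by apply/seteqP; split => w // _; exact: leey.
  by under eq_fun do rewrite allE; rewrite allE; exact: cvg_cst.
rewrite lee_fin => t0 contG.
have mtau := measurable_hit_time_le a0 cZ mX0 mZ ^~ hl.
have atom := negligible_eq_cdf_continuous P mtau contG.
have crossN : P.-negligible
    (\bigcup_k crossing_event Z (hit_time alpha X0 Z l) k.+1%:R^-1).
  apply: negligible_bigcup => k.
  have k0 : 0 < k.+1%:R^-1 :> R by rewrite invr_gt0.
  exact: cross _ (hit_time_stopping a0 cZ hl) _ k0.
apply: prob_cvg_eventually => [n|||w].
- exact: measurable_hit_time_disc_le.
- exact: mtau.
- apply: negligibleS (negligibleU atom crossN) => w [/= + eventually_not].
  rewrite le_eqVlt => /predU1P[|tau_t]; [by left | right].
  apply: contrapT => nocross; apply: eventually_not.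
  apply: (hit_time_disc_eventually_le a0 cZ D0 Dcvg hln hl cvl tau_t) => k crossk.
  by apply: nocross; exists k.
- exact: hit_time_disc_eventually_gt.
Qed.
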